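(* Let $a\in\mathbb{R}^n$ with $a_1=0$. For each integer $j\ge0$ and each $k\in\{0,1,\dots,\log n\}$ define $b_{j,k}:=a_{1+2^k j}$, with the convention $b_{j,k}=0$ if $1+2^kj>n$. Then $$\max_{j\in[n]}a_j^2\le(\log n)\sum_{k=0}^{(\log n)-1}\sum_{j=1}^n(b_{j,k}-b_{j-1,k})^2.$$
   Context: Here $\log$ denotes the base-2 logarithm and $n$ is a power of $2$, so that $\log n$ is an integer. *)

From mathcomp Require Import all_boot all_order all_algebra.
Set Implicit Arguments. Unset Strict Implicit. Unset Printing Implicit Defensive.
Import Order.TTheory GRing.Theory Num.Theory.
Local Open Scope ring_scope.

(* Vectors a in R^n are represented 1-indexed as a : nat -> R; only the
   values a 1, ..., a n matter.
   b_{j,k} := a_{1 + 2^k j} if 1 + 2^k j <= n, and 0 otherwise. *)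
Definition bjk (R : numDomainType) (n : nat) (a : nat -> R) (j k : nat) : R :=
  if (1 + 2 ^ k * j <= n)%N then a (1 + 2 ^ k * j)%N else 0.

From mathcomp Require Import all_boot all_order all_algebra.
From mathcomp Require Import zify lra.
Import Order.TTheory GRing.Theory Num.Theory.
Local Open Scope ring_scope.

(* Call the indices 1 + 2^k q the grid of mesh 2^k.  For odd q, the point
   1 + 2^k q is reached from the point 1 + 2^k (q-1) of the coarser grid of
   mesh 2^(k+1) by the single increment b_{q,k} - b_{q-1,k}, whose square is
   at most the scale-k energy; for even q it already lies on the coarser grid.
   Descending from the grid of mesh n, whose only point is 1 where a vanishes,
   each a_j is a sum of at most log n increments, one per scale, and
   Cauchy-Schwarz turns this into the factor log n. *)

Definition bjk_energy {R : numDomainType} (n : nat) (a : nat -> R) (k : nat) : R :=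
  \sum_(1 <= j < n.+1) (bjk n a j k - bjk n a j.-1 k) ^+ 2.

Lemma ler_sum_nat_term (R : numDomainType) (F : nat -> R) [lo hi q : nat] :
  (forall j, 0 <= F j) -> (lo <= q < hi)%N -> F q <= \sum_(lo <= j < hi) F j.
Proof.
move=> F_ge0 q_in; rewrite (bigD1_seq q) /= ?mem_index_iota ?iota_uniq //.
by rewrite lerDl sumr_ge0.
Qed.

Lemma sqrrD_le (R : realFieldType) (i S D x d : R) :
  0 <= i -> 0 <= S -> x ^+ 2 <= i * S -> d ^+ 2 <= D ->
  (x + d) ^+ 2 <= (i + 1) * (D + S).
Proof.
move=> i_ge0 S_ge0; have [->|i_neq0] := eqVneq i 0 => hx hd.
  rewrite mul0r in hx.
  have -> : x = 0 by apply/eqP; rewrite -sqrf_eq0 eq_le sqr_ge0 andbT.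
  by rewrite !add0r mul1r (le_trans hd) // lerDl.
have i_gt0 : 0 < i by rewrite lt_def i_neq0.
(* i (i+1)(D+S) - i (x+d)^2 = (i+1)(iS - x^2) + i(i+1)(D - d^2) + (x - i d)^2 *)
rewrite -(ler_pM2l i_gt0).
have h1 : 0 <= (i + 1) * (i * S - x ^+ 2) by rewrite mulr_ge0 ?subr_ge0 //; lra.
have h2 : 0 <= i * (i + 1) * (D - d ^+ 2).
  by rewrite mulr_ge0 ?subr_ge0 // mulr_ge0 //; lra.
have h3 : 0 <= (x - i * d) ^+ 2 by apply: sqr_ge0.
nra.
Qed.

Section DyadicEnergy.
Variables (R : realFieldType) (n : nat) (a : nat -> R).
Hypothesis a1 : a 1%N = 0.

Local Notation E := (bjk_energy n a).

Lemma bjk_energy_ge0 k : 0 <= E k.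
Proof. by apply: sumr_ge0 => j _; apply: sqr_ge0. Qed.

Lemma sqr_step_le_bjk_energy k q : (2 ^ k * q.+1 < n)%N ->
  (a (1 + 2 ^ k * q.+1) - a (1 + 2 ^ k * q)) ^+ 2 <= E k.
Proof.
move=> lt_n; have pos : (0 < 2 ^ k)%N by rewrite expn_gt0.
have q_in : (1 <= q.+1 < n.+1)%N by apply/andP; split; nia.
rewrite /bjk_energy; apply: le_trans (ler_sum_nat_term _
  (fun j => (bjk n a j k - bjk n a j.-1 k) ^+ 2) (fun j => sqr_ge0 _) q_in).
by rewrite /bjk /= !ifT //; nia.
Qed.

Lemma sqr_le_bjk_energy d k q : (n <= 2 ^ (k + d))%N -> (2 ^ k * q < n)%N ->
  a (1 + 2 ^ k * q) ^+ 2 <= d%:R * \sum_(k <= k' < k + d) E k'.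
Proof.
elim: d k q => [|d IH] k q n_le lt_n.
  have -> : q = 0%N by rewrite addn0 in n_le; nia.
  by rewrite muln0 addn0 a1 expr0n mul0r.
rewrite -addSnnS in n_le *; rewrite big_ltn ?ltn_addr // -natr1.
have rest_ge0 : 0 <= \sum_(k.+1 <= k' < k.+1 + d) E k'.
  by apply: sumr_ge0 => *; apply: bjk_energy_ge0.
have IH_even p : (2 ^ k * p.*2 < n)%N ->
    a (1 + 2 ^ k * p.*2) ^+ 2 <= d%:R * \sum_(k.+1 <= k' < k.+1 + d) E k'.
  by rewrite -mul2n mulnCA mulnA -expnS; apply: IH.
rewrite -(odd_double_half q) in lt_n *; case: (odd q) lt_n => /=.
  rewrite add1n => lt_n.
  rewrite -[a _](subrK (a (1 + 2 ^ k * q./2.*2))) addrC.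
  apply: sqrrD_le; rewrite ?ler0n ?sqr_step_le_bjk_energy //.
  by apply: IH_even; nia.
rewrite add0n => lt_n; apply: le_trans (IH_even _ lt_n) _.
by apply: ler_pM; rewrite ?ler0n ?lerDl ?lerDr ?bjk_energy_ge0.
Qed.

End DyadicEnergy.

Theorem claimC3 (R : realFieldType) (m : nat) (a : nat -> R) :
  a 1%N = 0 ->
  \big[Num.max/0]_(1 <= j < (2 ^ m).+1) (a j ^+ 2)
    <= m%:R * \sum_(0 <= k < m) \sum_(1 <= j < (2 ^ m).+1)
                 (bjk (2 ^ m) a j k - bjk (2 ^ m) a j.-1 k) ^+ 2.
Proof.
move=> a1; rewrite big_seq_cond; apply: bigmax_le => [|j].
  by rewrite mulr_ge0 ?sumr_ge0 // => k _; apply: bjk_energy_ge0.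
rewrite andbT mem_index_iota => j_in.
have j_eq : (1 + 2 ^ 0 * j.-1 = j)%N by rewrite expn0 mul1n; lia.
rewrite -[j in a j]j_eq; apply: (@sqr_le_bjk_energy R (2 ^ m) a a1 m 0).
  exact: leqnn.
by rewrite expn0 mul1n; lia.
Qed.
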